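(* Let $S$ be a $\Sigma_1$-sequent, $H$ a Herbrand structure of $S$, $D$ a decomposition of $H$, $S^\sim$ the schematic extended Herbrand sequent of $S$ w.r.t. $D$, and $C=C(S^\sim)$ its canonical formula. Let $\mathcal F$ be the set of propositional formulas (built with $\wedge,\vee,\neg,\bot,\top$) whose atoms are atoms occurring in $C$, and define $F\sim G$ iff $F\leftrightarrow G$ is E-valid. Let $\mathcal S\subseteq\mathcal F$ be the set of $A\in\mathcal F$ such that $[X\backslash\lambda\bar\alpha.A]$ is a solution of $S^\sim$. Then: (1) $\mathcal B=(\mathcal F/{\sim},\wedge,\vee,\neg,\bot,\top)$ is a Boolean algebra (with order $[F]\le[G]$ iff $F\to G$ is E-valid); (2) $\mathcal S/{\sim}$ is closed under $\wedge$ and is convex in $(\mathcal F/{\sim},\le)$, i.e. whenever $[A]\le[B]\le[A']$ with $A,A'\in\mathcal S$ and $B\in\mathcal F$, then $B\in\mathcal S$; thus $(\mathcal S/{\sim},\wedge)$ is a convex subalgebra of the meet-semilattice $(\mathcal F/{\sim},\wedge)$; (3) $[C]$ is the least element of $(\mathcal S/{\sim},\le)$.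
   Context: We work in first-order predicate logic with equality. A $\Sigma_1$-sequent is a sequent $S$ of the form $\forall\bar x_1 F_1,\dots,\forall\bar x_p F_p\vdash\exists\bar x_{p+1}F_{p+1},\dots,\exists\bar x_q F_q$, where each $F_i$ is quantifier-free and $\bar x_i$ is a block of $k_i\ge 0$ variables. A sequent is E-valid if it is valid in predicate logic with equality (a quantifier-free formula or sequent with free variables is called E-valid if its universal closure is); a quasi-tautology is a quantifier-free E-valid sequent. A Herbrand structure of $S$ is a tuple $H=(H_1,\dots,H_q)$, $H_i$ a finite set of $k_i$-vectors of ground terms, such that, with $\mathcal F_i=\{F_i[\bar x_i\backslash\bar t]:\bar t\in H_i\}$ if $k_i>0$ and $\mathcal F_i=\{F_i\}$ if $k_i=0$, the sequent $\mathcal F_1\cup\dots\cup\mathcal F_p\vdash\mathcal F_{p+1}\cup\dots\cup\mathcal F_q$ is a quasi-tautology. A decomposition of $H$ is a pair $D=(U_1,\dots,U_q)\circ W$ where, for fresh variables $\bar\alpha=(\alpha_1,\dots,\alpha_n)$, each $U_i$ is a finite set of $k_i$-vectors of terms possibly containing the $\alpha_j$, and $W=\{\bar w_1,\dots,\bar w_k\}$ is a finite set of $n$-vectors of ground terms not containing any $\alpha_j$, such that $H_i=\{u[\bar\alpha\backslash\bar w]:u\in U_i,\bar w\in W\}$ for every $i$ with $k_i>0$. Put $\mathcal F'_i=\{F_i[\bar x_i\backslash\bar t]:\bar t\in U_i\}$ if $k_i>0$ and $\mathcal F'_i=\{F_i\}$ if $k_i=0$. For an $n$-place predicate variable $X$,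 the schematic extended Herbrand sequent of $S$ w.r.t. $D$ is $$S^\sim:\ X\bar\alpha\to\bigwedge_{i=1}^k X\bar w_i,\ \mathcal F'_1,\dots,\mathcal F'_p\vdash\mathcal F'_{p+1},\dots,\mathcal F'_q.$$ For a quantifier-free formula $A$ whose free variables are among $\alpha_1,\dots,\alpha_n$, the second-order substitution $[X\backslash\lambda\bar\alpha.A]$ is a solution of $S^\sim$ if $S^\sim[X\backslash\lambda\bar\alpha.A]$ is a quasi-tautology. Let $F[l]$ be the conjunction of all formulas in $\mathcal F'_1\cup\dots\cup\mathcal F'_p$ and $F[r]$ the disjunction of all formulas in $\mathcal F'_{p+1}\cup\dots\cup\mathcal F'_q$. The canonical formula is $C(S^\sim)=F[l]\wedge\neg F[r]$. *)

From Stdlib Require Import List Arith Classical.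
Import ListNotations.

(* Variables are natural numbers; function and predicate symbols are
   natural numbers (a symbol applied to argument lists of different lengths
   is interpreted independently, i.e. symbols are effectively (name,arity)). *)
Inductive term : Type :=
| Var : nat -> term
| Fn  : nat -> list term -> term.

Inductive atom : Type :=
| AEq   : term -> term -> atom
| APred : nat -> list term -> atom.

Inductive form : Type :=
| FAtom : atom -> form
| FBot  : form
| FTop  : form
| FNot  : form -> form
| FAnd  : form -> form -> form
| FOr   : form -> form -> form
| FImp  : form -> form -> form.

Fixpoint tsubst (s : nat -> term) (t : term) : term :=
  match t with
  | Var x => s x
  | Fn f ts => Fn f (map (tsubst s) ts)
  end.

Definition asubst (s : nat -> term) (a : atom) : atom :=
  match a with
  | AEq t u => AEq (tsubst s t) (tsubst s u)
  | APred p ts => APred p (map (tsubst s) ts)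
  end.

Fixpoint fsubst (s : nat -> term) (A : form) : form :=
  match A with
  | FAtom a => FAtom (asubst s a)
  | FBot => FBot
  | FTop => FTop
  | FNot B => FNot (fsubst s B)
  | FAnd B C => FAnd (fsubst s B) (fsubst s C)
  | FOr B C => FOr (fsubst s B) (fsubst s C)
  | FImp B C => FImp (fsubst s B) (fsubst s C)
  end.

Definition inst_vec (v : list term) : nat -> term := fun j => nth j v (Var j).

Fixpoint tvars_lt (n : nat) (t : term) : Prop :=
  match t with
  | Var j => j < n
  | Fn _ ts =>
      (fix go (l : list term) : Prop :=
         match l with
         | [] => True
         | u :: l' => tvars_lt n u /\ go l'
         end) ts
  end.

Definition avars_lt (n : nat) (a : atom) : Prop :=
  match a with
  | AEq t u => tvars_lt n t /\ tvars_lt n u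
  | APred _ ts => Forall (tvars_lt n) ts
  end.

Fixpoint fvars_lt (n : nat) (A : form) : Prop :=
  match A with
  | FAtom a => avars_lt n a
  | FBot | FTop => True
  | FNot B => fvars_lt n B
  | FAnd B C | FOr B C | FImp B C => fvars_lt n B /\ fvars_lt n C
  end.

Definition ground (t : term) : Prop := tvars_lt 0 t.

Fixpoint atoms (A : form) : list atom :=
  match A with
  | FAtom a => [a]
  | FBot | FTop => []
  | FNot B => atoms B
  | FAnd B C | FOr B C | FImp B C => atoms B ++ atoms C
  end.

Fixpoint no_imp (A : form) : Prop :=
  match A with
  | FAtom _ | FBot | FTop => True
  | FNot B => no_imp B
  | FAnd B C | FOr B C => no_imp B /\ no_imp C
  | FImp _ _ => False
  end.

Record structure : Type := {
  dom : Type;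
  fn  : nat -> list dom -> dom;
  pr  : nat -> list dom -> Prop
}.

Fixpoint teval (M : structure) (rho : nat -> dom M) (t : term) : dom M :=
  match t with
  | Var x => rho x
  | Fn f ts => fn M f (map (teval M rho) ts)
  end.

Definition aeval (M : structure) (rho : nat -> dom M) (a : atom) : Prop :=
  match a with
  | AEq t u => teval M rho t = teval M rho u
  | APred p ts => pr M p (map (teval M rho) ts)
  end.

Fixpoint feval (M : structure) (rho : nat -> dom M) (A : form) : Prop :=
  match A with
  | FAtom a => aeval M rho a
  | FBot => False
  | FTop => True
  | FNot B => ~ feval M rho B
  | FAnd B C => feval M rho B /\ feval M rho C
  | FOr B C => feval M rho B \/ feval M rho C
  | FImp B C => feval M rho B -> feval M rho C
  end.

(* E-validity of a quantifier-free formula (= validity of its universal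
   closure in predicate logic with equality) *)
Definition Evalid (A : form) : Prop :=
  forall (M : structure) (rho : nat -> dom M), feval M rho A.

Definition Eequiv (A B : form) : Prop := Evalid (FAnd (FImp A B) (FImp B A)).

Definition Ele (A B : form) : Prop := Evalid (FImp A B).

Definition quasi_taut (Gamma Delta : list form) : Prop :=
  forall (M : structure) (rho : nat -> dom M),
    (forall A, In A Gamma -> feval M rho A) ->
    exists B, In B Delta /\ feval M rho B.

Definition conj_list (l : list form) : form := fold_right FAnd FTop l.
Definition disj_list (l : list form) : form := fold_right FOr FBot l.

(* A Sigma_1-sequent  forall x1 F1, ..., forall xp Fp |- exists x(p+1) F(p+1), ..., exists xq Fq.
   Each component is a pair (k_i, F_i); the bound block x_i consists of the
   variables Var 0, ..., Var (k_i - 1) of F_i. *)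
Record sig1seq : Type := {
  ante : list (nat * form);
  succ : list (nat * form)
}.

Definition sig1_wf (S : sig1seq) : Prop :=
  forall kF, In kF (ante S ++ succ S) -> fvars_lt (fst kF) (snd kF).

Definition inst_comp (kF : nat * form) (Vs : list (list term)) : list form :=
  match fst kF with
  | 0 => [snd kF]
  | S _ => map (fun t => fsubst (inst_vec t) (snd kF)) Vs
  end.

Definition inst_side (comps : list (nat * form)) (Vss : list (list (list term)))
  : list form :=
  concat (map (fun p => inst_comp (fst p) (snd p)) (combine comps Vss)).

(* H = (H_1, ..., H_q), split into the antecedent part and succedent part;
   each H_i is a finite set (list) of k_i-vectors of terms *)
Record hstruct : Type := {
  hA : list (list (list term));
  hS : list (list (list term))
}.

Definition vecs_ok (comps : list (nat * form)) (Vss : list (list (list term)))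
  (P : term -> Prop) : Prop :=
  length Vss = length comps /\
  forall i kF Vs v, nth_error comps i = Some kF -> nth_error Vss i = Some Vs ->
    In v Vs -> length v = fst kF /\ Forall P v.

Definition is_herbrand (S : sig1seq) (H : hstruct) : Prop :=
  vecs_ok (ante S) (hA H) ground /\
  vecs_ok (succ S) (hS H) ground /\
  quasi_taut (inst_side (ante S) (hA H)) (inst_side (succ S) (hS H)).

(* D = (U_1,...,U_q) o W, with fresh variables alpha_1..alpha_n represented
   by Var 0, ..., Var (n-1) (fresh, since the sequent is closed) *)
Record decomp : Type := {
  dn : nat;
  uA : list (list (list term));
  uS : list (list (list term));
  dW : list (list term)
}.

Definition decomp_side (comps : list (nat * form)) (Hs Us : list (list (list term)))
  (W : list (list term)) : Prop :=
  forall i kF Hi Ui, nth_error comps i = Some kF -> nth_error Hs i = Some Hi ->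
    nth_error Us i = Some Ui -> 0 < fst kF ->
    forall v, In v Hi <->
      exists u w, In u Ui /\ In w W /\ v = map (tsubst (inst_vec w)) u.

Definition is_decomposition (S : sig1seq) (H : hstruct) (D : decomp) : Prop :=
  vecs_ok (ante S) (uA D) (tvars_lt (dn D)) /\
  vecs_ok (succ S) (uS D) (tvars_lt (dn D)) /\
  (forall w, In w (dW D) -> length w = dn D /\ Forall ground w) /\
  decomp_side (ante S) (hA H) (uA D) (dW D) /\
  decomp_side (succ S) (hS H) (uS D) (dW D).

Definition Fl (S : sig1seq) (D : decomp) : list form := inst_side (ante S) (uA D).
Definition Fr (S : sig1seq) (D : decomp) : list form := inst_side (succ S) (uS D).

(* S~[X \ lambda alpha. A]:
   A -> /\_i A[alpha\w_i], F'_1,...,F'_p |- F'_(p+1),...,F'_q *)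
Definition ext_seq_ante (S : sig1seq) (D : decomp) (A : form) : list form :=
  FImp A (conj_list (map (fun w => fsubst (inst_vec w) A) (dW D))) :: Fl S D.

Definition is_solution (S : sig1seq) (D : decomp) (A : form) : Prop :=
  fvars_lt (dn D) A /\ quasi_taut (ext_seq_ante S D A) (Fr S D).

Definition canon (S : sig1seq) (D : decomp) : form :=
  FAnd (conj_list (Fl S D)) (FNot (disj_list (Fr S D))).

Definition in_calF (S : sig1seq) (D : decomp) (A : form) : Prop :=
  no_imp A /\ forall a, In a (atoms A) -> In a (atoms (canon S D)).

Definition in_calS (S : sig1seq) (D : decomp) (A : form) : Prop :=
  in_calF S D A /\ is_solution S D A.

(* (P / eqv, meet, join, neg, bot, top) is a Boolean algebra:
   P is closed under the operations, eqv is a congruence on P, and the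
   quotient satisfies the axioms of a bounded, distributive, complemented
   lattice. *)
Definition BoolAlgUpTo (P : form -> Prop) (eqv : form -> form -> Prop)
  (meet join : form -> form -> form) (neg : form -> form) (bot top : form) : Prop :=
  P bot /\ P top /\
  (forall x, P x -> P (neg x)) /\
  (forall x y, P x -> P y -> P (meet x y)) /\
  (forall x y, P x -> P y -> P (join x y)) /\
  (forall x, P x -> eqv x x) /\
  (forall x y, P x -> P y -> eqv x y -> eqv y x) /\
  (forall x y z, P x -> P y -> P z -> eqv x y -> eqv y z -> eqv x z) /\
  (forall x x', P x -> P x' -> eqv x x' -> eqv (neg x) (neg x')) /\
  (forall x x' y y', P x -> P x' -> P y -> P y' -> eqv x x' -> eqv y y' ->
     eqv (meet x y) (meet x' y')) /\
  (forall x x' y y', P x -> P x' -> P y -> P y' -> eqv x x' -> eqv y y' ->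
     eqv (join x y) (join x' y')) /\
  (forall x y, P x -> P y -> eqv (meet x y) (meet y x)) /\
  (forall x y, P x -> P y -> eqv (join x y) (join y x)) /\
  (forall x y z, P x -> P y -> P z -> eqv (meet x (meet y z)) (meet (meet x y) z)) /\
  (forall x y z, P x -> P y -> P z -> eqv (join x (join y z)) (join (join x y) z)) /\
  (forall x y, P x -> P y -> eqv (meet x (join x y)) x) /\
  (forall x y, P x -> P y -> eqv (join x (meet x y)) x) /\
  (forall x y z, P x -> P y -> P z ->
     eqv (meet x (join y z)) (join (meet x y) (meet x z))) /\
  (forall x y z, P x -> P y -> P z ->
     eqv (join x (meet y z)) (meet (join x y) (join x z))) /\
  (forall x, P x -> eqv (meet x top) x) /\
  (forall x, P x -> eqv (join x bot) x) /\
  (forall x, P x -> eqv (meet x (neg x)) bot) /\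
  (forall x, P x -> eqv (join x (neg x)) top).

From Stdlib Require Import List Arith Classical Lia.
Import ListNotations.

(* Everything is decided by a semantic reformulation of "A is a solution".
   Classically unfolding the quasi-tautology S~[X\lambda alpha.A], a formula
   A (with variables among alpha) is a solution iff every model of the
   canonical formula C satisfies A but falsifies some instance A[alpha\w_i]
   ([sem_solution_iff]).  From this:
   - closure under /\ and convexity are immediate, since E-valid implications
     are preserved under instantiation ([sem_solution_and],
     [sem_solution_convex]);
   - C itself is a solution: if a model of C satisfied every C[alpha\w_i],
     it would satisfy every antecedent and falsify every succedent formula of
     the Herbrand sequent, because each instance in H_i is an instance of some
     u in U_i at some w in W ([inst_side_transfer], [canon_refutes_instance]);
   - every solution is implied by C, so C is least ([sem_solution_least]).
   Part (1) is the propositional fact that E-equivalence classes of formulas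
   form a Boolean algebra, for any set of formulas closed under the
   connectives ([boolalg_of_closed]). *)

Fixpoint term_ind' (P : term -> Prop) (hv : forall n, P (Var n))
  (hf : forall f ts, Forall P ts -> P (Fn f ts)) (t : term) : P t :=
  match t with
  | Var n => hv n
  | Fn f ts => hf f ts ((fix go (l : list term) : Forall P l :=
      match l with
      | [] => Forall_nil _
      | u :: l' => Forall_cons _ (term_ind' P hv hf u) (go l')
      end) ts)
  end.

Lemma tvars_lt_Fn n f ts : tvars_lt n (Fn f ts) <-> Forall (tvars_lt n) ts.
Proof.
  simpl. induction ts as [|u l IH]; simpl.
  - split; auto.
  - rewrite IH. split.
    + intros [Hu Hl]; constructor; auto.
    + intros Hul; inversion Hul; auto.
Qed.

Lemma teval_subst M rho s t :
  teval M rho (tsubst s t) = teval M (fun x => teval M rho (s x)) t.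
Proof.
  induction t as [x|f ts IH] using term_ind'; simpl; auto.
  f_equal. rewrite map_map. apply map_ext_in. intros u Hu.
  rewrite Forall_forall in IH. auto.
Qed.

Lemma feval_subst M rho s A :
  feval M rho (fsubst s A) <-> feval M (fun x => teval M rho (s x)) A.
Proof.
  induction A; simpl; try tauto.
  destruct a; simpl.
  - rewrite !teval_subst. tauto.
  - rewrite map_map, (map_ext _ _ (fun t => teval_subst M rho s t)). tauto.
Qed.

Lemma teval_cong M k r1 r2 t : tvars_lt k t -> (forall x, x < k -> r1 x = r2 x) ->
  teval M r1 t = teval M r2 t.
Proof.
  intros Ht Hr. induction t as [x|f ts IH] using term_ind'; [simpl in *; auto|].
  rewrite tvars_lt_Fn, Forall_forall in Ht. rewrite Forall_forall in IH.
  simpl. f_equal. apply map_ext_in. auto.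
Qed.

Lemma feval_cong M k r1 r2 A : fvars_lt k A -> (forall x, x < k -> r1 x = r2 x) ->
  (feval M r1 A <-> feval M r2 A).
Proof.
  intros HA Hr. induction A; simpl in *; try tauto;
    try (destruct HA; rewrite IHA1, IHA2 by assumption; tauto).
  destruct a; simpl in *.
  - destruct HA. rewrite (teval_cong M k r1 r2 t), (teval_cong M k r1 r2 t0); tauto.
  - rewrite Forall_forall in HA.
    rewrite (map_ext_in _ (teval M r2) l) by (intros; eapply teval_cong; eauto). tauto.
Qed.

Lemma tvars_mono k n t : k <= n -> tvars_lt k t -> tvars_lt n t.
Proof.
  intros Hk. induction t as [x|f ts IH] using term_ind'; [simpl; lia|].
  rewrite !tvars_lt_Fn, !Forall_forall. rewrite Forall_forall in IH. auto.
Qed.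

Lemma fvars_mono k n A : k <= n -> fvars_lt k A -> fvars_lt n A.
Proof.
  intros Hk. induction A; simpl; try tauto; try (intros [? ?]; auto).
  destruct a; simpl.
  - intros [? ?]; split; eapply tvars_mono; eauto.
  - rewrite !Forall_forall. intros; eapply tvars_mono; eauto.
Qed.

Lemma tvars_subst k n s t : tvars_lt k t -> (forall x, x < k -> tvars_lt n (s x)) ->
  tvars_lt n (tsubst s t).
Proof.
  intros Ht Hs. induction t as [x|f ts IH] using term_ind'; [simpl in *; auto|].
  change (tvars_lt n (Fn f (map (tsubst s) ts))).
  rewrite tvars_lt_Fn in *. rewrite Forall_forall in IH, Ht |- *.
  intros u Hu. apply in_map_iff in Hu as [v [<- Hv]]. auto.
Qed.

Lemma fvars_subst k n s A : fvars_lt k A -> (forall x, x < k -> tvars_lt n (s x)) ->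
  fvars_lt n (fsubst s A).
Proof.
  intros HA Hs. induction A; simpl in *; try tauto; try (destruct HA; auto).
  destruct a; simpl in *.
  - destruct HA; split; eapply tvars_subst; eauto.
  - rewrite Forall_forall in *. intros u Hu.
    apply in_map_iff in Hu as [v [<- Hv]]. eapply tvars_subst; eauto.
Qed.

Lemma fvars_atoms n A : fvars_lt n A <-> (forall a, In a (atoms A) -> avars_lt n a).
Proof.
  induction A; simpl;
    try (rewrite IHA1, IHA2; split;
      [ intros [H1 H2] a Ha; apply in_app_or in Ha as [Ha|Ha]; auto
      | intros Ha; split; intros; apply Ha; apply in_or_app; auto ]).
  - split; [intros ? b [<-|[]]; auto | intros Ha; apply Ha; auto].
  - split; [intros _ a []|auto].
  - split; [intros _ a []|auto].
  - exact IHA.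
Qed.

Lemma feval_inst_comp M rho F u s : fvars_lt (length u) F ->
  feval M rho (fsubst (inst_vec (map (tsubst s) u)) F) <->
  feval M rho (fsubst s (fsubst (inst_vec u) F)).
Proof.
  intros HF. rewrite !feval_subst. apply (feval_cong M (length u)); auto.
  intros x Hx. unfold inst_vec.
  rewrite (nth_indep _ (Var x) (tsubst s (Var x))) by (rewrite length_map; lia).
  rewrite map_nth. apply teval_subst.
Qed.

Lemma feval_conj M rho l : feval M rho (conj_list l) <-> forall A, In A l -> feval M rho A.
Proof.
  induction l; simpl.
  - split; auto. intros _ A [].
  - rewrite IHl. split.
    + intros [Ha Hl] A [<-|HA]; auto.
    + intros Hl; split; auto.
Qed.

Lemma feval_disj M rho l : feval M rho (disj_list l) <-> exists A, In A l /\ feval M rho A.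
Proof.
  induction l; simpl.
  - split; [intros []| intros [A [[] _]]].
  - rewrite IHl. split.
    + intros [Ha|[A [HA HB]]]; eauto.
    + intros [A [[<-|HA] HB]]; eauto.
Qed.

Lemma fvars_conj n l : (forall A, In A l -> fvars_lt n A) -> fvars_lt n (conj_list l).
Proof. induction l; simpl; auto. Qed.

Lemma fvars_disj n l : (forall A, In A l -> fvars_lt n A) -> fvars_lt n (disj_list l).
Proof. induction l; simpl; auto. Qed.

Lemma feval_canon M rho S D : feval M rho (canon S D) <->
  (forall X, In X (Fl S D) -> feval M rho X) /\
  ~ (exists B, In B (Fr S D) /\ feval M rho B).
Proof. unfold canon. simpl. rewrite feval_conj, feval_disj. tauto. Qed.

Lemma Ele_fsubst s A B : Ele A B -> Ele (fsubst s A) (fsubst s B).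
Proof.
  intros HAB M rho. change (feval M rho (fsubst s (FImp A B))).
  apply feval_subst, HAB.
Qed.

Lemma Ele_trans A B C : Ele A B -> Ele B C -> Ele A C.
Proof. intros HAB HBC M rho HA. apply HBC, HAB, HA. Qed.

Lemma Eequiv_Ele A B : Eequiv A B -> Ele A B /\ Ele B A.
Proof. intros HAB. split; intros M rho; apply (HAB M rho). Qed.

Lemma Ele_iff_meet F G : Ele F G <-> Eequiv (FAnd F G) F.
Proof.
  unfold Ele, Eequiv, Evalid; simpl.
  split; intros HFG M rho; specialize (HFG M rho); tauto.
Qed.

(* Any set of formulas closed under the connectives is, modulo E-equivalence,
   a Boolean algebra: all laws are classical propositional tautologies. *)
Lemma boolalg_of_closed (P : form -> Prop) :
  P FBot -> P FTop -> (forall x, P x -> P (FNot x)) ->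
  (forall x y, P x -> P y -> P (FAnd x y)) ->
  (forall x y, P x -> P y -> P (FOr x y)) ->
  BoolAlgUpTo P Eequiv FAnd FOr FNot FBot FTop.
Proof.
  intros Hbot Htop Hnot Hand Hor. unfold BoolAlgUpTo, Eequiv, Evalid.
  repeat split; auto; intros;
    match goal with |- feval ?M ?rho _ =>
      repeat match goal with
        Hv : forall (M0 : structure) (r : nat -> dom M0), _ |- _ => specialize (Hv M rho)
      end
    end; simpl in *; try tauto.
  all: match goal with |- context [feval ?M ?rho ?x] =>
         destruct (classic (feval M rho x)); tauto end.
Qed.

Lemma in_calF_and S D A B :
  in_calF S D A -> in_calF S D B -> in_calF S D (FAnd A B).
Proof.
  intros [HA1 HA2] [HB1 HB2]. split; [split; auto|].
  intros a Ha. apply in_app_or in Ha as [Ha|Ha]; auto.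
Qed.

Lemma in_calF_or S D A B :
  in_calF S D A -> in_calF S D B -> in_calF S D (FOr A B).
Proof.
  intros [HA1 HA2] [HB1 HB2]. split; [split; auto|].
  intros a Ha. apply in_app_or in Ha as [Ha|Ha]; auto.
Qed.

(* Elimination of implication, to bring formulas into the language of \mathcal F. *)
Fixpoint elim_imp (A : form) : form :=
  match A with
  | FAtom a => FAtom a
  | FBot => FBot
  | FTop => FTop
  | FNot B => FNot (elim_imp B)
  | FAnd B C => FAnd (elim_imp B) (elim_imp C)
  | FOr B C => FOr (elim_imp B) (elim_imp C)
  | FImp B C => FOr (FNot (elim_imp B)) (elim_imp C)
  end.

Lemma elim_imp_no_imp A : no_imp (elim_imp A).
Proof. induction A; simpl; auto. Qed.

Lemma elim_imp_atoms A : atoms (elim_imp A) = atoms A.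
Proof. induction A; simpl; congruence. Qed.

Lemma elim_imp_equiv A : Eequiv (elim_imp A) A.
Proof.
  intros M rho. enough (feval M rho (elim_imp A) <-> feval M rho A) by (simpl; tauto).
  induction A; simpl; try tauto.
Qed.

Lemma inst_side_in comps Vss A : In A (inst_side comps Vss) ->
  exists i kF Vs, nth_error comps i = Some kF /\ nth_error Vss i = Some Vs /\
    In A (inst_comp kF Vs).
Proof.
  unfold inst_side. revert Vss.
  induction comps as [|c cs IH]; intros [|V Vs]; simpl; try tauto.
  intros HA. apply in_app_or in HA as [HA|HA].
  - exists 0, c, V; simpl; auto.
  - destruct (IH Vs HA) as [i [kF [W [Hc [HV HW]]]]]. exists (S i), kF, W; simpl; auto.
Qed.

Lemma inst_side_in2 comps Vss A i kF Vs : nth_error comps i = Some kF ->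
  nth_error Vss i = Some Vs -> In A (inst_comp kF Vs) -> In A (inst_side comps Vss).
Proof.
  unfold inst_side. revert Vss i.
  induction comps as [|c cs IH]; intros [|V Vs'] [|i]; simpl; try discriminate.
  - intros Hc HV HA. inversion Hc; inversion HV; subst. apply in_or_app; auto.
  - intros Hc HV HA. apply in_or_app; right. eapply IH; eauto.
Qed.

Lemma inst_side_vars comps Us n A :
  (forall kF, In kF comps -> fvars_lt (fst kF) (snd kF)) ->
  vecs_ok comps Us (tvars_lt n) ->
  In A (inst_side comps Us) -> fvars_lt n A.
Proof.
  intros Hwf [_ Hv] HA. apply inst_side_in in HA as [i [kF [U [Hc [HU HA]]]]].
  assert (Hk := Hwf kF (nth_error_In _ _ Hc)).
  unfold inst_comp in HA. destruct (fst kF) eqn:E.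
  - destruct HA as [<-|[]]. eapply fvars_mono; [|eauto]; lia.
  - apply in_map_iff in HA as [u [<- Hu]].
    destruct (Hv i kF U u Hc HU Hu) as [Hl Hf].
    eapply fvars_subst; [eauto|]. intros x Hx. unfold inst_vec.
    rewrite Forall_forall in Hf. apply Hf, nth_In. lia.
Qed.

Lemma inst_side_transfer comps Hs Us W (P : term -> Prop) :
  (forall kF, In kF comps -> fvars_lt (fst kF) (snd kF)) ->
  vecs_ok comps Us P -> length Hs = length comps -> decomp_side comps Hs Us W ->
  forall X, In X (inst_side comps Hs) ->
    In X (inst_side comps Us) \/
    exists F w, In F (inst_side comps Us) /\ In w W /\
      forall M rho, feval M rho X <-> feval M rho (fsubst (inst_vec w) F).
Proof.
  intros Hwf [HlU HvU] HlH Hds X HX.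
  apply inst_side_in in HX as [i [kF [Hi [Hc [HHi HX]]]]].
  destruct (nth_error Us i) as [Ui|] eqn:EU.
  2:{ apply nth_error_None in EU.
       assert (i < length Hs) by (apply nth_error_Some; congruence). lia. }
  assert (Hk := Hwf kF (nth_error_In _ _ Hc)).
  unfold inst_comp in HX. destruct (fst kF) eqn:E.
  - left. eapply inst_side_in2; eauto. unfold inst_comp. rewrite E. exact HX.
  - right. apply in_map_iff in HX as [v [<- Hv]].
    destruct (proj1 (Hds i kF Hi Ui Hc HHi EU ltac:(lia) v) Hv)
      as [u [w [Hu [Hw ->]]]].
    destruct (HvU i kF Ui u Hc EU Hu) as [Hlu _].
    exists (fsubst (inst_vec u) (snd kF)), w. split; [|split; [exact Hw|]].
    + eapply inst_side_in2; eauto. unfold inst_comp. rewrite E.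
      apply in_map_iff; eauto.
    + intros M rho. apply feval_inst_comp. rewrite Hlu, E. exact Hk.
Qed.

Section Solutions.

Variables (S : sig1seq) (H : hstruct) (D : decomp).
Hypothesis Hwf : sig1_wf S.
Hypothesis Hdec : is_decomposition S H D.

Definition sem_solution (A : form) : Prop :=
  forall M rho, feval M rho (canon S D) ->
    feval M rho A /\ exists w, In w (dW D) /\ ~ feval M rho (fsubst (inst_vec w) A).

Lemma sem_solution_iff A :
  quasi_taut (ext_seq_ante S D A) (Fr S D) <-> sem_solution A.
Proof.
  split.
  - intros Hq M rho HC. apply feval_canon in HC as [Hl Hr].
    apply NNPP. intros Hn. apply Hr, Hq. intros X [<-|HX]; auto.
    simpl. intros HA. apply feval_conj. intros Y HY.
    apply in_map_iff in HY as [w [<- Hw]].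
    apply NNPP. intros HnY. apply Hn. eauto.
  - intros Hs M rho Hant. apply NNPP. intros Hr.
    assert (HC : feval M rho (canon S D)).
    { apply feval_canon. split; auto. intros X HX. apply Hant. right; exact HX. }
    destruct (Hs M rho HC) as [HA [w [Hw Hnw]]]. apply Hnw.
    specialize (Hant _ (or_introl eq_refl)). simpl in Hant.
    apply (proj1 (feval_conj _ _ _) (Hant HA)). apply in_map_iff; eauto.
Qed.

Lemma sem_solution_and A B :
  sem_solution A -> sem_solution B -> sem_solution (FAnd A B).
Proof.
  intros HA HB M rho HC.
  destruct (HA M rho HC) as [HAe [w [Hw Hnw]]]. destruct (HB M rho HC) as [HBe _].
  split; [simpl; auto|]. exists w. split; auto. simpl. tauto.
Qed.

Lemma sem_solution_convex A B A' :
  sem_solution A -> sem_solution A' -> Ele A B -> Ele B A' -> sem_solution B.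
Proof.
  intros HA HA' HAB HBA' M rho HC.
  destruct (HA M rho HC) as [HAe _]. destruct (HA' M rho HC) as [_ [w [Hw Hnw]]].
  split; [exact (HAB M rho HAe)|]. exists w. split; auto.
  intros HBw. apply Hnw, (Ele_fsubst (inst_vec w) B A' HBA' M rho HBw).
Qed.

Lemma sem_solution_least A : sem_solution A -> Ele (canon S D) A.
Proof. intros HA M rho HC. apply (HA M rho HC). Qed.

Lemma wf_ante kF : In kF (ante S) -> fvars_lt (fst kF) (snd kF).
Proof. intros HkF. apply Hwf, in_or_app; auto. Qed.

Lemma wf_succ kF : In kF (succ S) -> fvars_lt (fst kF) (snd kF).
Proof. intros HkF. apply Hwf, in_or_app; auto. Qed.

Lemma canon_vars : fvars_lt (dn D) (canon S D).
Proof.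
  destruct Hdec as [HuA [HuS _]]. unfold canon; simpl; split.
  - apply fvars_conj. intros X HX. exact (inst_side_vars _ _ _ _ wf_ante HuA HX).
  - apply fvars_disj. intros X HX. exact (inst_side_vars _ _ _ _ wf_succ HuS HX).
Qed.

Lemma calF_vars A : in_calF S D A -> fvars_lt (dn D) A.
Proof.
  intros [_ HA]. apply fvars_atoms. intros a Ha.
  exact (proj1 (fvars_atoms _ _) canon_vars a (HA a Ha)).
Qed.

Lemma in_calS_iff A : in_calS S D A <-> in_calF S D A /\ sem_solution A.
Proof.
  unfold in_calS, is_solution. rewrite sem_solution_iff.
  split; [tauto|]. intros [HF Hs]. split; [|split]; auto using calF_vars.
Qed.

Hypothesis Hher : is_herbrand S H.

(* Herbrand's theorem at work: no model of C satisfies all instances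
   C[alpha\w_i], since it would satisfy the antecedent and falsify the
   succedent of the Herbrand sequent, which is a quasi-tautology. *)
Lemma canon_refutes_instance M rho : feval M rho (canon S D) ->
  exists w, In w (dW D) /\ ~ feval M rho (fsubst (inst_vec w) (canon S D)).
Proof.
  intros HC. apply NNPP. intros Hall.
  assert (Hinst : forall w, In w (dW D) ->
      feval M (fun x => teval M rho (inst_vec w x)) (canon S D)).
  { intros w Hw. apply feval_subst, NNPP. eauto. }
  apply feval_canon in HC as [Hl Hr].
  destruct Hdec as [HuA [HuS [_ [HdA HdS]]]].
  destruct Hher as [[HlA _] [[HlS _] Hq]].
  destruct (Hq M rho) as [B [HB HBe]].
  - intros X HX.
    destruct (inst_side_transfer _ _ _ _ _ wf_ante HuA HlA HdA X HX)
      as [HXl|[F [w [HF [Hw HXF]]]]]; [auto|].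
    apply HXF, feval_subst. exact (proj1 (proj1 (feval_canon _ _ _ _) (Hinst w Hw)) F HF).
  - destruct (inst_side_transfer _ _ _ _ _ wf_succ HuS HlS HdS B HB)
      as [HBr|[F [w [HF [Hw HBF]]]]]; [eauto|].
    apply (proj2 (proj1 (feval_canon _ _ _ _) (Hinst w Hw))).
    exists F. split; auto. apply feval_subst, HBF, HBe.
Qed.

Lemma sem_solution_canon : sem_solution (canon S D).
Proof. intros M rho HC. split; auto using canon_refutes_instance. Qed.

End Solutions.

Theorem mainTheorem2 (S : sig1seq) (H : hstruct) (D : decomp) :
  sig1_wf S -> is_herbrand S H -> is_decomposition S H D ->
  (* (1) F/~ is a Boolean algebra, with order [F] <= [G] iff F -> G E-valid *)
  (BoolAlgUpTo (in_calF S D) Eequiv FAnd FOr FNot FBot FTop /\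
   (forall F G, in_calF S D F -> in_calF S D G ->
      (Ele F G <-> Eequiv (FAnd F G) F))) /\
  (* (2) S/~ is closed under /\ and convex in (F/~, <=) *)
  (forall A B, in_calS S D A -> in_calS S D B -> in_calS S D (FAnd A B)) /\
  (forall A B A', in_calS S D A -> in_calS S D A' -> in_calF S D B ->
      Ele A B -> Ele B A' -> in_calS S D B) /\
  (* (3) [C] is the least element of (S/~, <=) *)
  (exists C0, in_calF S D C0 /\ Eequiv C0 (canon S D)) /\
  (forall C0, in_calF S D C0 -> Eequiv C0 (canon S D) ->
      in_calS S D C0 /\ (forall A, in_calS S D A -> Ele C0 A)).
Proof.
  intros Hwf Hher Hdec.
  pose proof (in_calS_iff S H D Hwf Hdec) as HS.
  split; [split|split; [|split; [|split]]].
  - apply boolalg_of_closed; auto using in_calF_and, in_calF_or;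
      try (split; [exact I | intros a []]).
  - intros F G _ _. apply Ele_iff_meet.
  - intros A B. rewrite !HS. intros [HA HsA] [HB HsB].
    split; auto using in_calF_and, sem_solution_and.
  - intros A B A'. rewrite !HS. intros [_ HsA] [_ HsA'] HB HAB HBA'.
    split; eauto using sem_solution_convex.
  - exists (elim_imp (canon S D)). split; [|apply elim_imp_equiv].
    split; [apply elim_imp_no_imp|]. rewrite elim_imp_atoms. auto.
  - intros C0 HC0 Heq. destruct (Eequiv_Ele _ _ Heq) as [HC0C HCC0].
    pose proof (sem_solution_canon S H D Hwf Hdec Hher) as HsC.
    split.
    + apply HS. split; eauto using sem_solution_convex.
    + intros A HA. apply HS in HA as [_ HsA].
      eapply Ele_trans; eauto using sem_solution_least.
Qed.
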